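(* Let $G$ be a graph with $n\ge 3$ vertices and $s\ge 3$ edges $e_1,\dots,e_s$, where $e_i=u_iv_i$, and suppose $G$ has finite girth $g$. Let $m\in\mathbb{N}$ and let $\mathcal{H}=(L,H)$ be an $m$-fold cover of $G$ such that $|E_H(L(u),L(v))|=m$ for every $uv\in E(G)$. Let $\mathcal{U}=\{I\subseteq V(H): |L(v)\cap I|=1 \text{ for each } v\in V(G)\}$, and for $i\in[s]$ let $S_i$ be the set of $I\in\mathcal{U}$ such that $H[I]$ contains an edge of $E_H(L(u_i),L(v_i))$. Then: (i) For every $k\in[g-1]$ and all indices $1\le i_1<\cdots<i_k\le s$, $\left|\bigcap_{j=1}^k S_{i_j}\right| = m^{n-k}$. (ii) If $e_{i_1},\dots,e_{i_g}$ are $g$ distinct edges of $G$, then $\left|\bigcap_{j=1}^g S_{i_j}\right|\le m^{n-g+1}$; moreover, if $e_{i_1},\dots,e_{i_g}$ are not the edge set of a $g$-cycle of $G$, then $\left|\bigcap_{j=1}^g S_{i_j}\right| = m^{n-g}$. (iii) For every $k\ge g+1$ and all indices $1\le i_1<\cdots<i_k\le s$, $\left|\bigcap_{j=1}^k S_{i_j}\right| \le m^{n-g}$.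
   Context: All graphs are finite and simple; $[m]=\{1,\dots,m\}$. The girth of a graph is the length of a shortest cycle. For $S,U \subseteq V(H)$, $E_H(S,U)$ is the set of edges of $H$ with one endpoint in $S$ and the other in $U$. A cover of a graph $G$ is a pair $\mathcal{H}=(L,H)$ where $H$ is a graph and $L: V(G)\to \mathcal{P}(V(H))$ satisfies: (1) $\{L(u): u\in V(G)\}$ is a partition of $V(H)$; (2) for each $u \in V(G)$, $H[L(u)]$ is complete; (3) if $E_H(L(u),L(v))\neq\emptyset$ then $u=v$ or $uv\in E(G)$; (4) if $uv \in E(G)$ then $E_H(L(u),L(v))$ is a matching (possibly empty). The cover is $m$-fold if $|L(u)|=m$ for all $u\in V(G)$. $H[I]$ denotes the subgraph of $H$ induced by $I$. *)

From mathcomp Require Import all_boot.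
Set Implicit Arguments. Unset Strict Implicit. Unset Printing Implicit Defensive.

Definition simple_graph (T : finType) (e : rel T) : Prop :=
  symmetric e /\ irreflexive e.

Definition is_cycle (T : finType) (e : rel T) (c : seq T) : bool :=
  [&& uniq c, 2 < size c & cycle e c].

Definition has_girth (T : finType) (e : rel T) (g : nat) : Prop :=
  (exists c, is_cycle e c /\ size c = g) /\
  (forall c, is_cycle e c -> g <= size c).

Definition cycle_edges (T : finType) (c : seq T) : {set {set T}} :=
  [set [set x; next c x] | x in [set y | y \in c]].

Definition cross_edges (W : finType) (hE : rel W) (A B : {set W}) :
  {set {set W}} :=
  [set [set x; y] | x in A, y in B & hE x y].

Definition is_cover (V W : finType) (e : rel V) (hE : rel W)
  (L : V -> {set W}) : Prop :=
  [/\
      (forall w, exists u, w \in L u),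
      (forall u v, u != v -> [disjoint L u & L v]),
      (forall u x y, x \in L u -> y \in L u -> x != y -> hE x y),
      (forall u v x y, x \in L u -> y \in L v -> hE x y -> u = v \/ e u v) &
      (forall u v, e u v -> forall x y y',
         x \in L u -> y \in L v -> y' \in L v -> hE x y -> hE x y' -> y = y')].

Definition is_mfold_cover (V W : finType) (e : rel V) (hE : rel W)
  (L : V -> {set W}) (m : nat) : Prop :=
  is_cover e hE L /\ forall u, #|L u| = m.

Definition transversals (V W : finType) (L : V -> {set W}) : {set {set W}} :=
  [set I : {set W} | [forall v, #|L v :&: I| == 1]].

Definition S_edge (V W : finType) (hE : rel W) (L : V -> {set W}) (a b : V)
  : {set {set W}} :=
  [set I in transversals L |
     [exists x, exists y, [&& x \in I, y \in I &
        [set x; y] \in cross_edges hE (L a) (L b)]]].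

From mathcomp Require Import all_boot zify.
Set Implicit Arguments. Unset Strict Implicit. Unset Printing Implicit Defensive.

(* A transversal I of the cover (L, H) is the image of a unique choice
   function f, with f w \in L w for every vertex w, and I belongs to S_i
   exactly when f lifts the edge e_i = u_i v_i to an edge of H.  Hence the
   intersection of the S_i over a nonempty index set K has as many elements
   as the set [lifts K] of choice functions lifting every edge of K.

   Each E_H(L a, L b) over an edge ab is a matching with m = #|L b| edges,
   hence perfect.  So deleting from K an edge xy at a leaf x multiplies the
   number of lifts by m (the value at x becomes free), and a forest K has
   exactly m ^ (n - #|K|) lifts.  On the graph side: fewer than g edges form
   a forest; exactly g edges form a forest unless they are the edges of a
   g-cycle; and more than g edges contain g edges forming a forest, because
   two cycles cannot have edge sets differing in a single edge (degree
   parity).  Statements (i)-(iii) follow, using that the intersection can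
   only shrink as K grows. *)

Section CycleEdges.
Variable T : finType.

Lemma next_next_neq (c : seq T) x : uniq c -> 2 < size c -> x \in c ->
  next c x != x /\ next c (next c x) != x.
Proof.
move=> Uc Sc xc; rewrite -!(next_rot (index x c) Uc).
have Er : rot (index x c) c = x :: drop (index x c).+1 c ++ take (index x c) c.
  by rewrite /rot (drop_nth x) ?index_mem // nth_index.
have Ur : uniq (rot (index x c) c) by rewrite rot_uniq.
have Sr : size (rot (index x c) c) = size c by rewrite size_rot.
rewrite Er in Ur Sr *.
case: (drop _ c ++ take _ c) Ur Sr => [|y [|z q]] /= Ur Sr; rewrite -?Sr // in Sc.
move: Ur; rewrite !inE => /andP[/norP[xy /norP[xz _]] /andP[/norP[yz _] _]].
by rewrite eqxx (negbTE (_ : y != x)) 1?eq_sym // eqxx.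
Qed.

Lemma card_cycle_edges (c : seq T) : uniq c -> 2 < size c ->
  #|cycle_edges c| = size c.
Proof.
move=> Uc Sc; rewrite /cycle_edges card_in_imset; first by rewrite cardsE; apply/card_uniqP.
move=> x y; rewrite !inE => xc yc /setP Exy; apply/eqP/negP => /negP xy.
have := Exy x; rewrite !inE eqxx /= => /esym /orP[/eqP yx|/eqP nyx].
  by rewrite yx eqxx in xy.
have := Exy y; rewrite !inE eqxx /= => /orP[/eqP yx|/eqP nxy].
  by rewrite yx eqxx in xy.
by have [_] := next_next_neq Uc Sc xc; rewrite -nxy -nyx eqxx.
Qed.

Definition degree (x : T) (B : {set {set T}}) := #|[set E in B | x \in E]|.

Lemma degreeU1 x (E : {set T}) (B : {set {set T}}) : E \notin B ->
  degree x (E |: B) = (x \in E) + degree x B.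
Proof.
move=> EB; rewrite /degree; case xE: (x \in E).
  have -> : [set E' in E |: B | x \in E'] = E |: [set E' in B | x \in E'].
    by apply/setP => E'; rewrite !inE; case: eqP => [->|] //=; rewrite xE.
  by rewrite cardsU1 inE (negbTE EB).
by apply: eq_card => E'; rewrite !inE; case: eqP => [->|] //=; rewrite xE andbF.
Qed.

(* Every vertex of a cycle has degree two in it, every other vertex degree 0;
   this parity information is what rules out two g-cycles sharing g-1 edges. *)
Lemma degree_cycle_edges (c : seq T) x : uniq c -> 2 < size c ->
  degree x (cycle_edges c) = (x \in c).*2.
Proof.
move=> Uc Sc; rewrite /degree; case xc: (x \in c); last first.
  apply/eqP; rewrite cards_eq0; apply/eqP/setP => E; rewrite !inE.
  apply/negP => /andP[/imsetP[y]]; rewrite inE => yc -> /set2P[] xy.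
    by rewrite xy yc in xc.
  by rewrite xy mem_next yc in xc.
have [nx nnx] := next_next_neq Uc Sc xc.
have -> : [set E in cycle_edges c | x \in E] =
          [set [set x; next c x]; [set prev c x; x]].
  apply/setP => E; rewrite !inE; apply/andP/orP.
    case=> /imsetP[y]; rewrite inE => yc -> /set2P[] xy; first by left; rewrite xy.
    by right; rewrite xy prev_next // setUC.
  case=> /eqP ->; split; rewrite ?inE ?eqxx ?orbT //.
    by apply/imsetP; exists x; rewrite ?inE.
  apply/imsetP; exists (prev c x); first by rewrite inE mem_prev.
  by rewrite next_prev // setUC.
rewrite cards2 /=; case: eqP => // /setP E.
have := E (next c x); rewrite !inE eqxx /= (negbTE nx) orbF => /esym/eqP np.
by move: nnx; rewrite np next_prev // eqxx.
Qed.

End CycleEdges.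

Lemma subset_of_card (T : finType) (A : {set T}) k : k <= #|A| ->
  exists2 B : {set T}, B \subset A & #|B| = k.
Proof.
elim: k => [|k IH] Hk; first by exists set0; rewrite ?sub0set ?cards0.
have [B BA Bk] := IH (ltnW Hk).
have /subsetPn[a aA aB] : ~~ (A \subset B).
  by apply: contraTN Hk => /subset_leq_card; rewrite Bk -ltnNge.
exists (a |: B); first by rewrite subUset sub1set aA.
by rewrite cardsU1 aB Bk.
Qed.

Section EdgeFamilies.
Variables (V : finType) (e : rel V) (s : nat) (u v : 'I_s -> V).
Hypothesis e_sym : symmetric e.
Hypothesis e_irr : irreflexive e.
Hypothesis e_uv : forall i, e (u i) (v i).
Hypothesis edge_neq : forall i j, i != j -> [set u i; v i] != [set u j; v j].

Local Notation edge i := [set u i; v i].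
Implicit Types (K A : {set 'I_s}) (i j : 'I_s).

Definition edge_set (K : {set 'I_s}) : {set {set V}} := [set edge i | i in K].

Lemma uv_neq i : u i != v i.
Proof. by apply: contraTneq (e_uv i) => ->; rewrite e_irr. Qed.

Lemma edge_inj i j : edge i = edge j -> i = j.
Proof. by move=> E; case: (eqVneq i j) => // /edge_neq; rewrite E eqxx. Qed.

Lemma card_edge_set K : #|edge_set K| = #|K|.
Proof. by apply: card_in_imset => i j _ _; apply: edge_inj. Qed.

Lemma edge_setU1 i K : edge_set (i |: K) = edge i |: edge_set K.
Proof. by rewrite /edge_set imsetU1. Qed.

Lemma edge_notin i K : i \notin K -> edge i \notin edge_set K.
Proof. by move=> iK; apply/imsetP => -[j jK /edge_inj ij]; rewrite ij jK in iK. Qed.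

Lemma edge_rel x y i : [set x; y] = edge i -> e x y.
Proof.
move=> E; have ux : u i \in [set x; y] by rewrite E set21.
have vx : v i \in [set x; y] by rewrite E set22.
have := uv_neq i.
case/set2P: ux => ux; case/set2P: vx => vx; rewrite ux vx ?eqxx // => _.
  by rewrite -ux -vx e_uv.
by rewrite e_sym -ux -vx e_uv.
Qed.

Definition other_end j x := if x == u j then v j else u j.

Lemma other_endE j x : x \in edge j -> [set x; other_end j x] = edge j.
Proof.
by rewrite /other_end; case/set2P => ->; rewrite ?eqxx // eq_sym (negbTE (uv_neq j)) setUC.
Qed.

Definition adj (K : {set 'I_s}) x y := [exists i in K, [set x; y] == edge i].

Lemma adj_sym K : symmetric (adj K).
Proof. by move=> x y; rewrite /adj setUC. Qed.

Lemma adj_rel K x y : adj K x y -> e x y.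
Proof. by case/existsP => i /andP[_ /eqP /edge_rel]. Qed.

Definition leafless (K : {set 'I_s}) := forall x i, i \in K -> x \in edge i ->
  exists j, [/\ j \in K, j != i & x \in edge j].

Lemma extend_or_close K x p : leafless K -> uniq (x :: p) -> path (adj K) x p ->
  p != [::] ->
  (exists c, [/\ uniq c, 2 < size c & cycle (adj K) c]) \/
  (exists w, uniq (w :: x :: p) /\ path (adj K) w (x :: p)).
Proof.
move=> noleaf; case: p => [|y q] // U P _.
have /existsP[i /andP[iK /eqP Ei]] : adj K x y by case/andP: P.
have xi : x \in edge i by rewrite -Ei set21.
have [j [jK ji xj]] := noleaf x i iK xi.
set w := other_end j x; have Ew := other_endE xj; rewrite -/w in Ew.
have axw : adj K x w by apply/existsP; exists j; rewrite jK Ew eqxx.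
have wy : w != y by apply: contraNneq ji => wy; apply/eqP/edge_inj; rewrite -Ew -Ei wy.
have wx : w != x by apply: contraTneq (adj_rel axw) => ->; rewrite e_irr.
case wq: (w \in x :: y :: q); last first.
  by right; exists w; rewrite cons_uniq wq U /= adj_sym axw.
left; move: wq; rewrite !inE (negbTE wx) (negbTE wy) /= => wq.
case/splitPr: wq U P => q1 q2 U P.
exists (x :: y :: q1 ++ [:: w]); split.
- have E : x :: y :: q1 ++ w :: q2 = (x :: y :: q1 ++ [:: w]) ++ q2 by rewrite /= -catA.
  by move: U; rewrite E cat_uniq => /andP[].
- by rewrite /= size_cat /= addnS.
- rewrite /cycle rcons_path /= last_cat /= [adj K w x]adj_sym axw andbT.
  by move: P; rewrite /= !cat_path /= andbT => /andP[-> /andP[-> /andP[-> _]]].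
Qed.

(* Since simple paths have at most #|V| vertices, iterating the extension
   must close a cycle. *)
Lemma leafless_path_closes K n x p : leafless K -> #|V| - size p <= n ->
  uniq (x :: p) -> path (adj K) x p -> p != [::] ->
  exists c, [/\ uniq c, 2 < size c & cycle (adj K) c].
Proof.
move=> noleaf; elim: n x p => [|n IH] x p Hn U P p0;
  case: (extend_or_close noleaf U P p0) => // -[w [Uw Pw]].
  have := max_card (mem (w :: x :: p)); rewrite (card_uniqP Uw) /=.
  by move: Hn; rewrite leqn0 subn_eq0 => Hn; rewrite ltnNge ltnW.
by apply: (IH w (x :: p)) => //=; rewrite subnS -subn1 leq_subLR add1n.
Qed.

Lemma leafless_cycle K : K != set0 -> leafless K ->
  exists c, is_cycle e c /\ cycle_edges c \subset edge_set K.
Proof.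
move=> /set0Pn[i iK] noleaf.
have U : uniq [:: u i; v i] by rewrite /= inE uv_neq.
have P : path (adj K) (u i) [:: v i].
  by rewrite /= andbT; apply/existsP; exists i; rewrite iK eqxx.
have [c [Uc Sc Cc]] := leafless_path_closes noleaf (leqnn _) U P isT.
exists c; split; first by rewrite /is_cycle Uc Sc (sub_cycle (@adj_rel K)).
apply/subsetP => E /imsetP[y]; rewrite inE => yc ->.
have /existsP[j /andP[jK /eqP ->]] := next_cycle Cc yc.
exact: imset_f.
Qed.

Definition leaf (K : {set 'I_s}) x i :=
  [&& i \in K, x \in edge i & [forall j in K, (x \in edge j) ==> (j == i)]].

Definition is_forest (K : {set 'I_s}) := [forall K0 : {set 'I_s},
  (K0 \subset K) && (K0 != set0) ==> [exists x, exists i, leaf K0 x i]].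

Lemma forest_sub (K1 K2 : {set 'I_s}) : K1 \subset K2 -> is_forest K2 -> is_forest K1.
Proof.
move=> S /forallP H; apply/forallP => K0; apply/implyP => /andP[S0 n0].
by apply: (implyP (H K0)); rewrite n0 (subset_trans S0 S).
Qed.

Lemma forest_leaf (K : {set 'I_s}) : is_forest K -> K != set0 -> exists x i, leaf K x i.
Proof.
move=> /forallP/(_ K); rewrite subxx /= => /implyP H /H.
by case/existsP => x /existsP[i Lf]; exists x, i.
Qed.

Lemma no_leaf_leafless (K : {set 'I_s}) : ~~ [exists x, exists i, leaf K x i] -> leafless K.
Proof.
move=> H x i iK xi; move: H; rewrite negb_exists => /forallP/(_ x).
rewrite negb_exists => /forallP/(_ i); rewrite /leaf iK xi /= negb_forall.
by case/existsP => j; rewrite !negb_imply => /andP[jK /andP[xj ji]]; exists j.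
Qed.

Lemma not_forest_cycle (K : {set 'I_s}) : ~~ is_forest K ->
  exists c, is_cycle e c /\ cycle_edges c \subset edge_set K.
Proof.
rewrite negb_forall => /existsP[K0]; rewrite negb_imply => /andP[/andP[S0 n0] H].
have [c [Cc Sc]] := leafless_cycle n0 (no_leaf_leafless H).
by exists c; split; last by apply: subset_trans Sc (imsetS _ S0).
Qed.

Definition covered (K : {set 'I_s}) := [set x | [exists j in K, x \in edge j]].

Lemma forest_covered (K : {set 'I_s}) : is_forest K -> K != set0 ->
  #|K| < #|covered K|.
Proof.
move: {2}#|K| (leqnn #|K|) => n; elim: n K => [|n IH] K Hn F n0.
  by move: n0; rewrite -card_gt0 ltnNge Hn.
have [x [i /and3P[iK xi /forallP Hl]]] := forest_leaf F n0.
have CK : #|K| = #|K :\ i|.+1 by rewrite (cardsD1 i) iK.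
have lost : covered (K :\ i) \proper covered K.
  apply/properP; split.
    apply/subsetP => y; rewrite !inE => /existsP[j /andP[]].
    by rewrite !inE => /andP[_ jK] yj; apply/existsP; exists j; rewrite jK !inE.
  exists x; first by rewrite inE; apply/existsP; exists i; rewrite iK.
  rewrite inE; apply/negP => /existsP[j /andP[]]; rewrite !inE => /andP[ji jK] xj.
  by have := Hl j; rewrite jK !inE xj (negbTE ji).
case: (eqVneq (K :\ i) set0) => [E0|n1].
  have S2 : edge i \subset covered K.
    by apply/subsetP => y yi; rewrite inE; apply/existsP; exists i; rewrite iK.
  by have := subset_leq_card S2; rewrite cards2 uv_neq CK E0 cards0.
rewrite CK; apply: leq_trans (proper_card lost); rewrite ltnS; apply: IH n1.
  by rewrite -ltnS -CK.
exact: forest_sub (subD1set K i) F.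
Qed.

(* Two distinct cycles cannot have edge sets differing in a single edge:
   an endpoint of the first extra edge would have odd degree in one of them. *)
Lemma cycles_differ_in_one_edge (A : {set 'I_s}) i1 i2 c1 c2 :
  i1 != i2 -> i1 \notin A -> i2 \notin A -> is_cycle e c1 -> is_cycle e c2 ->
  cycle_edges c1 = edge_set (i1 |: A) -> cycle_edges c2 = edge_set (i2 |: A) ->
  False.
Proof.
move=> i12 i1A i2A C1 C2 E1 E2.
have [x x1 x2] : exists2 x, x \in edge i1 & x \notin edge i2.
  apply/subsetPn; apply: contra i12 => S.
  by apply/eqP/edge_inj/eqP; rewrite eqEcard S !cards2 !uv_neq.
have even c : is_cycle e c -> ~~ odd (degree x (cycle_edges c)).
  by case/and3P => Uc Sc _; rewrite degree_cycle_edges // odd_double.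
have := even _ C2; rewrite E2 edge_setU1 degreeU1 ?edge_notin // (negbTE x2) add0n.
have := even _ C1; rewrite E1 edge_setU1 degreeU1 ?edge_notin // x1 add1n /=.
by rewrite negbK => ->.
Qed.

Section Girth.
Variable g : nat.
Hypothesis girth_min : forall c, is_cycle e c -> g <= size c.

Lemma size_cycle_edges c : is_cycle e c -> #|cycle_edges c| = size c.
Proof. by case/and3P => Uc Sc _; apply: card_cycle_edges. Qed.

Lemma small_forest (K : {set 'I_s}) : #|K| < g -> is_forest K.
Proof.
apply: contraTT => /not_forest_cycle[c [Cc Sc]].
rewrite -leqNgt -card_edge_set; apply: leq_trans (girth_min Cc) _.
by rewrite -(size_cycle_edges Cc) subset_leq_card.
Qed.

Lemma girth_family_cycle (K : {set 'I_s}) : #|K| = g -> ~~ is_forest K ->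
  exists c, [/\ is_cycle e c, size c = g & cycle_edges c = edge_set K].
Proof.
move=> Kg /not_forest_cycle[c [Cc Sc]].
have cg : size c = g.
  apply/eqP; rewrite eqn_leq girth_min // andbT -(size_cycle_edges Cc) -Kg.
  by rewrite -card_edge_set subset_leq_card.
exists c; split => //; apply/eqP.
by rewrite eqEcard Sc card_edge_set (size_cycle_edges Cc) cg Kg /=.
Qed.

(* Among g+1 edges, deleting a suitable one leaves a forest: otherwise two
   deletions would leave two g-cycles differing in one edge. *)
Lemma girth_succ_forest (K : {set 'I_s}) : 0 < g -> #|K| = g.+1 ->
  exists2 i, i \in K & is_forest (K :\ i).
Proof.
move=> g_pos Kg.
have /set0Pn[i1 i1K] : K != set0 by rewrite -card_gt0 Kg.
have C1 : #|K :\ i1| = g by move: Kg; rewrite (cardsD1 i1) i1K => -[].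
case F1: (is_forest (K :\ i1)); first by exists i1.
have /set0Pn[i2 i2K1] : K :\ i1 != set0 by rewrite -card_gt0 C1.
have /andP[i21 i2K] : (i2 != i1) && (i2 \in K) by move: i2K1; rewrite !inE.
have C2 : #|K :\ i2| = g by move: Kg; rewrite (cardsD1 i2) i2K => -[].
case F2: (is_forest (K :\ i2)); first by exists i2.
have [c1 [Cc1 _ E1]] := girth_family_cycle C1 (negbT F1).
have [c2 [Cc2 _ E2]] := girth_family_cycle C2 (negbT F2).
set A := K :\ i1 :\ i2.
have A1 : K :\ i1 = i2 |: A by rewrite /A setD1K.
have A2 : K :\ i2 = i1 |: A.
  have -> : A = K :\ i2 :\ i1 by rewrite /A !setDDl setUC.
  by rewrite setD1K // !inE i1K andbT eq_sym.
exfalso; apply: (@cycles_differ_in_one_edge A i2 i1 c1 c2 i21) => //.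
- by rewrite !inE eqxx.
- by rewrite !inE eqxx andbF.
- by rewrite E1 A1.
- by rewrite E2 A2.
Qed.

Lemma large_family_forest (K : {set 'I_s}) : 0 < g -> g < #|K| ->
  exists2 K' : {set 'I_s}, K' \subset K & #|K'| = g /\ is_forest K'.
Proof.
move=> g_pos /subset_of_card[K1 K1K K1g].
have [i iK1 F] := girth_succ_forest g_pos K1g.
exists (K1 :\ i); first by apply: subset_trans (subD1set _ _) K1K.
by split => //; move: K1g; rewrite (cardsD1 i) iK1 => -[].
Qed.

End Girth.
End EdgeFamilies.

Section Lifts.
Variables (V W : finType) (e : rel V) (hE : rel W) (L : V -> {set W}) (m : nat).
Variables (s : nat) (u v : 'I_s -> V).
Hypothesis e_sym : symmetric e.
Hypothesis e_irr : irreflexive e.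
Hypothesis hE_sym : symmetric hE.
Hypothesis e_uv : forall i, e (u i) (v i).
Hypothesis cover : is_mfold_cover e hE L m.
Hypothesis cross_m : forall a b, e a b -> #|cross_edges hE (L a) (L b)| = m.
Implicit Types (K : {set 'I_s}) (f : {ffun V -> W}).

Lemma card_L a : #|L a| = m.
Proof. by case: cover => _ ->. Qed.

Lemma L_disjoint a b z : z \in L a -> z \in L b -> a = b.
Proof.
case: cover => -[_ disj _ _ _] _ za zb; case: (eqVneq a b) => // ab.
by have := disjointFr (disj a b ab) za; rewrite zb.
Qed.

Lemma mate_unique a b y x x' : e a b -> y \in L b -> x \in L a -> x' \in L a ->
  hE x y -> hE x' y -> x = x'.
Proof.
case: cover => -[_ _ _ _ matching] _ eab yb xa x'a hxy hx'y.
by apply: (matching b a _ y) => //; rewrite 1?e_sym // hE_sym.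
Qed.

(* Since E_H(L a, L b) is a matching with m = #|L b| edges, it is perfect:
   every vertex of L b has a mate in L a. *)
Lemma mate_exists a b y : e a b -> y \in L b -> exists2 x, x \in L a & hE x y.
Proof.
move=> eab yb.
pose matched := [set y in L b | [exists x in L a, hE x y]].
pose edge_at y := [set odflt y [pick x in L a | hE x y]; y].
have cover_cross : cross_edges hE (L a) (L b) \subset edge_at @: matched.
  apply/subsetP => E /imset2P[x y' xa]; rewrite !inE => /andP[y'b hxy] ->.
  apply/imsetP; exists y'; first by rewrite inE y'b; apply/existsP; exists x; rewrite xa.
  rewrite /edge_at; case: pickP => [x' /andP[x'a hx'y]|/(_ x)]; last by rewrite xa hxy.
  by rewrite /= (mate_unique eab y'b x'a xa hx'y hxy).
have : matched == L b.
  rewrite eqEcard card_L -(cross_m eab); apply/andP; split.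
    by apply/subsetP => z; rewrite inE => /andP[].
  by apply: leq_trans (subset_leq_card cover_cross) (leq_imset_card _ _).
move/eqP => Em; move: yb; rewrite -Em inE => /andP[_ /exists_inP[x xa hxy]].
by exists x.
Qed.

Definition mate a y := odflt y [pick x in L a | hE x y].

Lemma mateP a b y : e a b -> y \in L b -> mate a y \in L a /\ hE (mate a y) y.
Proof.
move=> eab yb; rewrite /mate; case: pickP => [x /andP[]|none] //.
by have [x xa hxy] := mate_exists eab yb; have := none x; rewrite xa hxy.
Qed.

Lemma mate_eq a b x y : e a b -> x \in L a -> y \in L b -> hE x y -> mate a y = x.
Proof.
move=> eab xa yb hxy; have [ma hm] := mateP eab yb.
exact: mate_unique eab yb ma xa hm hxy.
Qed.

Definition choice_fun f := [forall w, f w \in L w].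

Definition lifts K :=
  [set f | choice_fun f && [forall i in K, hE (f (u i)) (f (v i))]].

Lemma card_lifts0 : #|lifts set0| = m ^ #|V|.
Proof.
have -> : #|lifts set0| = #|(family (fun w => mem (L w)) : simpl_pred {ffun V -> W})|.
  apply: eq_card => f; rewrite !inE; apply/andP/familyP => [[/forallP H _] //|H].
  by split; apply/forallP => // i; rewrite inE.
rewrite card_family /image_mem cardE.
by elim: (enum V) => //= a r ->; rewrite card_L expnS.
Qed.

Definition update f x w := [ffun z => if z == x then w else f z].

Section LeafDeletion.
(* The
   lifts of K :\ i correspond to pairs of a lift of K and an arbitrary new
   value at x in L x, so deleting i multiplies the number of lifts by m. *)
Variables (K : {set 'I_s}) (i : 'I_s) (x y : V).
Hypothesis iK : i \in K.
Hypothesis exy : e x y.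
Hypothesis lift_i : forall f, hE (f (u i)) (f (v i)) = hE (f x) (f y).
Hypothesis x_leaf : forall j, j \in K -> j != i -> (u j != x) && (v j != x).

Let yx : y != x. Proof. by apply: contraTneq exy => ->; rewrite e_irr. Qed.

Definition reattach f := update f x (mate x (f y)).

Lemma update_choice f w : choice_fun f -> w \in L x -> choice_fun (update f x w).
Proof.
move=> /forallP fL wx; apply/forallP => z; rewrite ffunE.
by case: eqP => [->|]; rewrite ?fL.
Qed.

Lemma update_other f w j : j \in K -> j != i ->
  hE (update f x w (u j)) (update f x w (v j)) = hE (f (u j)) (f (v j)).
Proof.
by move=> jK ji; have /andP[ujx vjx] := x_leaf jK ji; rewrite !ffunE (negbTE ujx) (negbTE vjx).
Qed.

Lemma reattach_lifts f : f \in lifts (K :\ i) -> reattach f \in lifts K.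
Proof.
rewrite !inE => /andP[fL /forallP fK]; have [mx hm] := mateP exy (forallP fL y).
rewrite update_choice //=; apply/forallP => j; apply/implyP => jK.
case: (eqVneq j i) => [->|ji]; first by rewrite lift_i !ffunE eqxx (negbTE yx).
by rewrite update_other //; have := fK j; rewrite !inE ji jK.
Qed.

Lemma update_lifts f w : f \in lifts K -> w \in L x -> update f x w \in lifts (K :\ i).
Proof.
rewrite !inE => /andP[fL /forallP fK] wx; rewrite update_choice //=.
apply/forallP => j; apply/implyP; rewrite !inE => /andP[ji jK].
by rewrite update_other //; have := fK j; rewrite jK.
Qed.

Lemma reattach_update f w : f \in lifts K -> reattach (update f x w) = f.
Proof.
rewrite inE => /andP[/forallP fL /forallP fK].
have hxy : hE (f x) (f y) by rewrite -lift_i; have := fK i; rewrite iK.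
rewrite /reattach (_ : update f x w y = f y) ?ffunE ?(negbTE yx) //.
rewrite (mate_eq exy (fL x) (fL y) hxy).
by apply/ffunP => z; rewrite !ffunE; case: eqP => [->|].
Qed.

Lemma card_lifts_leaf : #|lifts (K :\ i)| = #|lifts K| * m.
Proof.
pose Phi f := (reattach f, f x).
have Phi_inj : injective Phi.
  move=> f1 f2 [/ffunP E1 E2]; apply/ffunP => z; case: (eqVneq z x) => [->//|zx].
  by have := E1 z; rewrite !ffunE (negbTE zx).
rewrite -(card_L x) -cardsX -(card_imset _ Phi_inj); apply: eq_card => -[f w].
apply/imsetP/idP => [[f' f'K [-> ->]]|].
  apply/setXP; split; first exact: reattach_lifts.
  by move: f'K; rewrite inE => /andP[/forallP fL _].
case/setXP => fK wx; exists (update f x w); first exact: update_lifts.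
by rewrite /Phi reattach_update // ffunE eqxx.
Qed.

End LeafDeletion.

Lemma leaf_lifts K x i : leaf u v K x i -> #|lifts (K :\ i)| = #|lifts K| * m.
Proof.
case/and3P => iK xi /forallP only_i.
apply: (@card_lifts_leaf K i x (other_end u v i x)) => //.
- by apply: (edge_rel e_sym e_irr e_uv (i := i)); rewrite (other_endE e_irr e_uv xi).
- move=> f; rewrite /other_end; case/set2P: xi => ->; first by rewrite eqxx.
  by rewrite eq_sym (negbTE (uv_neq e_irr e_uv i)) hE_sym.
- move=> j jK ji; have /implyP /(_ jK) /implyP x_j := only_i j.
  by apply/andP; split; apply: contraNneq ji => jx; apply: x_j; rewrite -jx !inE eqxx ?orbT.
Qed.

Lemma forest_lifts K : is_forest u v K -> #|lifts K| * m ^ #|K| = m ^ #|V|.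
Proof.
move: {2}#|K| (leqnn #|K|) => n; elim: n K => [|n IH] K Kn F.
  by move: Kn; rewrite leqn0 cards_eq0 => /eqP ->; rewrite cards0 muln1 card_lifts0.
have [->|K0] := eqVneq K set0; first by rewrite cards0 muln1 card_lifts0.
have [x [i Lf]] := forest_leaf F K0.
have iK : i \in K by case/and3P: Lf.
have CK : #|K| = #|K :\ i|.+1 by rewrite (cardsD1 i) iK.
rewrite CK expnS mulnA -(leaf_lifts Lf); apply: IH; first by rewrite -ltnS -CK.
exact: forest_sub (subD1set K i) F.
Qed.

Definition graph_of f := [set f w | w : V].

Lemma graph_meet f w : choice_fun f -> L w :&: graph_of f = [set f w].
Proof.
move=> /forallP fL; apply/setP => z; rewrite !inE.
apply/andP/eqP => [[zw /imsetP[w' _ zE]]|->]; last by split; rewrite ?fL ?imset_f.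
by rewrite zE (L_disjoint (fL w') (_ : f w' \in L w)) -?zE.
Qed.

Lemma graph_inj f1 f2 : choice_fun f1 -> choice_fun f2 ->
  graph_of f1 = graph_of f2 -> f1 = f2.
Proof.
move=> f1L f2L E; apply/ffunP => w.
by apply/set1P; rewrite -(graph_meet w f2L) -E graph_meet // set11.
Qed.

Lemma graph_transversal f : choice_fun f -> graph_of f \in transversals L.
Proof. by move=> fL; rewrite inE; apply/forallP => w; rewrite graph_meet // cards1. Qed.

Lemma transversal_graph I : I \in transversals L ->
  exists2 f, choice_fun f & I = graph_of f.
Proof.
rewrite inE => /forallP one.
have single w : exists z, L w :&: I == [set z].
  by have /cards1P[z ->] := one w; exists z.
pose f := [ffun w => xchoose (single w)].
have fP w : L w :&: I = [set f w] by rewrite ffunE; apply/eqP; exact: (xchooseP (single w)).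
have fLI w : f w \in L w :&: I by rewrite fP set11.
exists f; first by apply/forallP => w; have /setIP[] := fLI w.
apply/setP => z; apply/idP/imsetP => [zI|[w _ ->]]; last by have /setIP[] := fLI w.
case: cover => -[partition _ _ _ _] _; have [w zw] := partition z.
by exists w => //; apply/set1P; rewrite -fP inE zw.
Qed.

Lemma graph_S_edge f a b : choice_fun f ->
  (graph_of f \in S_edge hE L a b) = hE (f a) (f b).
Proof.
move=> fL; rewrite inE graph_transversal //=; apply/existsP/idP => [[x]|hab].
  case/existsP => y /and3P[xI yI /imset2P[a' b' a'a]].
  rewrite inE => /andP[b'b hab] Exy.
  have xy_graph z : z \in [set x; y] -> z \in graph_of f by case/set2P => ->.
  have /set1P <- : a' \in [set f a].
    by rewrite -graph_meet // inE a'a xy_graph // Exy set21.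
  have /set1P <- : b' \in [set f b].
    by rewrite -graph_meet // inE b'b xy_graph // Exy set22.
  exact: hab.
exists (f a); apply/existsP; exists (f b); rewrite !imset_f //=.
by apply/imset2P; exists (f a) (f b); rewrite ?inE ?(forallP fL) ?hab.
Qed.

Lemma card_bigcap_S_edge K : K != set0 ->
  #|\bigcap_(i in K) S_edge hE L (u i) (v i)| = #|lifts K|.
Proof.
move=> /set0Pn[i0 i0K].
have lift_choice f : f \in lifts K -> choice_fun f by rewrite inE => /andP[].
rewrite -(card_in_imset (f := graph_of)); last first.
  by move=> f1 f2 /lift_choice f1L /lift_choice f2L; apply: graph_inj.
apply: eq_card => I; apply/bigcapP/imsetP => [HI|[f fK ->] j jK].
  have /setIdP[/transversal_graph[f fL IE] _] := HI i0 i0K.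
  exists f => //; rewrite inE fL; apply/forallP => j; apply/implyP => jK.
  by rewrite -graph_S_edge // -IE HI.
move: fK; rewrite inE => /andP[fL /forallP fK].
by rewrite graph_S_edge //; have := fK j; rewrite jK.
Qed.

End Lifts.

Section Intersections.
Variables (V W : finType) (e : rel V) (hE : rel W) (L : V -> {set W}) (m : nat).
Variables (s : nat) (u v : 'I_s -> V).
Hypothesis e_sym : symmetric e.
Hypothesis e_irr : irreflexive e.
Hypothesis hE_sym : symmetric hE.
Hypothesis e_uv : forall i, e (u i) (v i).
Hypothesis cover : is_mfold_cover e hE L m.
Hypothesis cross_m : forall a b, e a b -> #|cross_edges hE (L a) (L b)| = m.
Implicit Types K : {set 'I_s}.

Local Notation S_meet K := (\bigcap_(i in K) S_edge hE L (u i) (v i)).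

Lemma card_S_meet_forest K : is_forest u v K -> K != set0 ->
  #|S_meet K| = m ^ (#|V| - #|K|).
Proof.
move=> F K0; rewrite (card_bigcap_S_edge u v cover K0).
have KV : #|K| < #|V| by apply: leq_trans (forest_covered e_irr e_uv F K0) (max_card _).
have [m0|m_pos] := posnP m.
  have : #|lifts hE L u v K| <= #|lifts hE L u v set0|.
    apply: subset_leq_card; apply/subsetP => f; rewrite !inE => /andP[-> _].
    by apply/forallP => i; rewrite inE.
  rewrite (card_lifts0 u v cover) m0 exp0n; last exact: leq_ltn_trans (leq0n _) KV.
  by rewrite leqn0 => /eqP ->; rewrite exp0n // subn_gt0.
have mK_pos : 0 < m ^ #|K| by rewrite expn_gt0 m_pos.
apply/eqP; rewrite -(eqn_pmul2r mK_pos) -expnD subnK ?(ltnW KV) //.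
by rewrite (forest_lifts e_sym e_irr hE_sym e_uv cover cross_m F).
Qed.

Lemma card_S_meet_mono K1 K2 : K1 \subset K2 -> #|S_meet K2| <= #|S_meet K1|.
Proof.
move=> K12; apply/subset_leq_card/bigcapsP => i iK1.
by apply: bigcap_inf; apply: (subsetP K12).
Qed.

End Intersections.

Theorem lemma11 (V W : finType) (e : rel V) (hE : rel W)
  (s g m : nat) (u v : 'I_s -> V) (L : V -> {set W}) :
  simple_graph e -> simple_graph hE ->
  3 <= #|V| -> 3 <= s ->
  (* e_1, ..., e_s is an enumeration of the edges of G, e_i = u_i v_i *)
  (forall i, e (u i) (v i)) ->
  (forall i j, i != j -> [set u i; v i] != [set u j; v j]) ->
  (forall x y, e x y -> exists i, [set x; y] = [set u i; v i]) ->
  has_girth e g ->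
  is_mfold_cover e hE L m ->
  (forall a b, e a b -> #|cross_edges hE (L a) (L b)| = m) ->
  let S := fun i => S_edge hE L (u i) (v i) in
  (* (i) *)
  (forall K : {set 'I_s}, 1 <= #|K| <= g - 1 ->
     #|\bigcap_(i in K) S i| = m ^ (#|V| - #|K|)) /\
  (* (ii) *)
  (forall K : {set 'I_s}, #|K| = g ->
     #|\bigcap_(i in K) S i| <= m ^ (#|V| - g + 1) /\
     (~ (exists c, is_cycle e c /\ size c = g /\
           cycle_edges c = [set [set u i; v i] | i in K]) ->
      #|\bigcap_(i in K) S i| = m ^ (#|V| - g))) /\
  (* (iii) *)
  (forall K : {set 'I_s}, g + 1 <= #|K| ->
     #|\bigcap_(i in K) S i| <= m ^ (#|V| - g)).
Proof.
move=> [e_sym e_irr] [hE_sym _] _ _ e_uv edge_neq _ [[c0 [c0_cycle c0_g]] girth_min]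
  cover cross_m S; rewrite /S.
have g_gt2 : 2 < g by rewrite -c0_g; case/and3P: c0_cycle.
have g_le_V : g <= #|V|.
  by case/and3P: c0_cycle => c0_uniq _ _; rewrite -c0_g -(card_uniqP c0_uniq) max_card.
have forest_meet := card_S_meet_forest e_sym e_irr hE_sym e_uv cover cross_m.
have small := small_forest e_sym e_irr e_uv edge_neq girth_min.
have nonempty (K : {set 'I_s}) : 0 < #|K| -> K != set0 by rewrite card_gt0.
split; [|split].
- move=> K /andP[K_pos K_small].
  by apply: forest_meet; [apply: small; lia | apply: nonempty].
- move=> K Kg; split.
    have /set0Pn[i iK] : K != set0 by apply: nonempty; lia.
    have Ki : #|K :\ i| = g.-1 by move: Kg; rewrite (cardsD1 i) iK; lia.
    apply: leq_trans (card_S_meet_mono hE L u v (subD1set K i)) _.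
    rewrite forest_meet ?Ki; first by have -> : #|V| - g.-1 = #|V| - g + 1 by lia.
      by apply: small; rewrite Ki; lia.
    by apply: nonempty; rewrite Ki; lia.
  move=> no_g_cycle; case F: (is_forest u v K).
    by rewrite forest_meet ?Kg // nonempty // Kg; lia.
  have [c [c_cycle c_g c_edges]] :=
    girth_family_cycle e_sym e_irr e_uv edge_neq girth_min Kg (negbT F).
  by case: no_g_cycle; exists c.
- move=> K; rewrite addn1 => K_large.
  have [K' K'K [K'g F]] :=
    large_family_forest e_sym e_irr e_uv edge_neq girth_min (ltnW (ltnW g_gt2)) K_large.
  apply: leq_trans (card_S_meet_mono hE L u v K'K) _.
  by rewrite forest_meet ?K'g // nonempty // K'g; lia.
Qed.
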